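(* Let $\mathcal X=\{1,\dots,N\}$, let $m>0$, and let $p,w$ be probability distributions on $\mathcal X$ with $p(x)\ge m$ and $w(x)\ge m$ for all $x\in\mathcal X$. Then for every probability distribution $v$ on $\mathcal X$, \[ D(w\parallel p)-D(v\parallel p)\le \log\frac1m\cdot\lVert w-v\rVert . \]
   Context: All logarithms are natural. For distributions $q,r$ on $\mathcal X$ with $r(x)>0$ for all $x$, $D(q\parallel r)=\sum_{x:\,q(x)>0}q(x)\log\frac{q(x)}{r(x)}$. For distributions $p,q$, $\lVert p-q\rVert=\sum_{x\in\mathcal X}|p(x)-q(x)|$. *)

From mathcomp Require Import all_boot all_order all_algebra.
From mathcomp Require Import all_classical all_reals.
From mathcomp Require Import exp.
Set Implicit Arguments. Unset Strict Implicit. Unset Printing Implicit Defensive.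
Import Order.TTheory GRing.Theory Num.Theory.
Local Open Scope ring_scope.

(* Distributions on the finite alphabet X = 'I_N (i.e. {1,...,N} up to relabelling),
   valued in an arbitrary real type R. Logarithm is the natural logarithm [ln]. *)
Definition is_distr (R : realType) (N : nat) (q : 'I_N -> R) : Prop :=
  (forall x, 0 <= q x) /\ \sum_(x < N) q x = 1.

Definition KL (R : realType) (N : nat) (q r : 'I_N -> R) : R :=
  \sum_(x < N | 0 < q x) q x * ln (q x / r x).

Definition l1dist (R : realType) (N : nat) (p q : 'I_N -> R) : R :=
  \sum_(x < N) `|p x - q x|.

From mathcomp Require Import all_boot all_order all_algebra.
From mathcomp Require Import all_classical all_reals.
From mathcomp Require Import exp.
From mathcomp Require Import ring lra.
Import Order.TTheory GRing.Theory Num.Theory.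
Set Implicit Arguments. Unset Strict Implicit. Unset Printing Implicit Defensive.
Local Open Scope ring_scope.

(* D(. || p) is convex, with gradient ln (w/p) + 1 at w; the tangent inequality
   at w gives D(w||p) - D(v||p) <= sum (w - v) ln (w/p), the constant part of the
   gradient cancelling because w and v have the same mass.  Since m <= w, p <= 1,
   every |ln (w/p)| is at most ln (1/m). *)

Section KullbackLeibler.
Variable R : realType.

Lemma ln_le_subr1 (x : R) : 0 < x -> ln x <= x - 1.
Proof.
move=> x0; have := @le_ln1Dx R (x - 1).
by rewrite subrKC; apply; rewrite ltrBrDr addNr.
Qed.

Lemma mulr_lnB_le (a b : R) : 0 < a -> 0 < b -> b * (ln a - ln b) <= a - b.
Proof.
move=> a0 b0; rewrite -ln_div ?posrE //.
have -> : a - b = b * (a / b - 1) by rewrite mulrBr mulr1 mulrCA divff ?gt_eqF ?mulr1.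
by rewrite ler_pM2l // ln_le_subr1 ?divr_gt0.
Qed.

Lemma KL_term_subr_le (a b c : R) : 0 < a -> 0 <= b -> 0 < c ->
  a * ln (a / c) - (if 0 < b then b * ln (b / c) else 0)
  <= (a - b) * ln (a / c) + (a - b).
Proof.
move=> a0 b0 c0; case: ifPn => [b_gt0 | ].
  have := mulr_lnB_le a0 b_gt0; rewrite !ln_div ?posrE //; lra.
rewrite -leNgt => b_le0; have -> : b = 0 by apply/eqP; rewrite eq_le b_le0 b0.
by rewrite !subr0 lerDl ltW.
Qed.

Lemma KL_subr_le (N : nat) (r q s : 'I_N -> R) :
  (forall x, 0 < r x) -> (forall x, 0 < q x) -> (forall x, 0 <= s x) ->
  \sum_(x < N) q x = \sum_(x < N) s x ->
  KL q r - KL s r <= \sum_(x < N) (q x - s x) * ln (q x / r x).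
Proof.
move=> r_gt0 q_gt0 s_ge0 mass_eq.
rewrite /KL (eq_bigl _ _ (fun x => q_gt0 x)) (big_mkcond (fun x => 0 < s x)) -sumrB.
apply: le_trans (ler_sum _ (fun x _ => KL_term_subr_le (q_gt0 x) (s_ge0 x) (r_gt0 x))) _.
by rewrite big_split /= sumrB mass_eq subrr addr0.
Qed.

Lemma distr_le1 (N : nat) (q : 'I_N -> R) x : is_distr q -> q x <= 1.
Proof. by move=> [q_ge0 <-]; rewrite (bigD1 x) //= lerDl sumr_ge0. Qed.

Lemma norm_ln_div_le (m a b : R) : 0 < m ->
  m <= a <= 1 -> m <= b <= 1 -> `|ln (a / b)| <= ln m^-1.
Proof.
move=> m0 /andP[ma a1] /andP[mb b1].
have a0 := lt_le_trans m0 ma; have b0 := lt_le_trans m0 mb.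
have := ln_le0 a1; have := ln_le0 b1.
have : ln m <= ln a by rewrite ler_ln ?posrE.
have : ln m <= ln b by rewrite ler_ln ?posrE.
rewrite ln_div ?lnV ?posrE // ler_norml opprK => *; apply/andP; split; lra.
Qed.

End KullbackLeibler.

Theorem lemma3 (R : realType) (N : nat) (m : R) (p w v : 'I_N -> R) :
  0 < m ->
  is_distr p -> is_distr w -> is_distr v ->
  (forall x, m <= p x) -> (forall x, m <= w x) ->
  KL w p - KL v p <= ln (m^-1) * l1dist w v.
Proof.
move=> m0 pD wD vD pm wm.
have p_gt0 x : 0 < p x by apply: lt_le_trans (pm x).
have w_gt0 x : 0 < w x by apply: lt_le_trans (wm x).
have [v_ge0 v1] := vD; have [_ w1] := wD.
apply: le_trans (KL_subr_le p_gt0 w_gt0 v_ge0 _) _; first by rewrite w1 v1.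
rewrite /l1dist mulr_sumr; apply: ler_sum => x _.
apply: le_trans (ler_norm _) _; rewrite normrM mulrC ler_wpM2r //.
by rewrite norm_ln_div_le // ?wm ?pm ?(distr_le1 x wD) ?(distr_le1 x pD).
Qed.
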